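(* Let $(L_i)_{i\in I}$ be a family of lattices with zero, and let $L=\coprod^0_{i\in I}L_i$ with coprojections $e_i\colon L_i\to L$. For each $i$, let $\varepsilon_i\colon\operatorname{Id}L_i\to\operatorname{Id}L$ be the map $X\mapsto\{y\in L: y\le e_i(x)\text{ for some }x\in X\}$, and let $\varepsilon\colon\coprod^0_{i\in I}\operatorname{Id}L_i\to\operatorname{Id}L$ be the unique $0$-lattice homomorphism whose composition with the $i$-th coprojection $\operatorname{Id}L_i\to\coprod^0_{i\in I}\operatorname{Id}L_i$ equals $\varepsilon_i$ for every $i\in I$. Then $\varepsilon$ is a $0$-lattice embedding (a one-to-one zero-preserving lattice homomorphism).
   Context: For a lattice $K$, $\operatorname{Id}K$ is the lattice of all ideals of $K$ (nonempty lower subsets closed under finite joins), ordered by inclusion; if $K$ has a zero, so does $\operatorname{Id}K$ (namely $\{0\}$). $\coprod^0_{i\in I}K_i$ denotes the coproduct of a family of lattices with zero in the category of lattices with zero and zero-preserving lattice homomorphisms. *)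

From HB Require Import structures.
From mathcomp Require Import all_boot all_order.
From mathcomp Require Import boolp.

Set Implicit Arguments.
Unset Strict Implicit.
Unset Printing Implicit Defensive.

Import Order.Theory.
Local Open Scope order_scope.

Definition is_0hom (d1 d2 : Order.disp_t) (A : bLatticeType d1)
    (B : bLatticeType d2) (f : A -> B) : Prop :=
  [/\ f \bot = \bot,
      (forall x y, f (x `&` y) = f x `&` f y) &
      (forall x y, f (x `|` y) = f x `|` f y)].

Definition is_coproduct0 (I : Type) (d : I -> Order.disp_t)
    (L : forall i, bLatticeType (d i)) (dC : Order.disp_t)
    (C : bLatticeType dC) (e : forall i, L i -> C) : Prop :=
  (forall i, is_0hom (e i)) /\
  (forall (dM : Order.disp_t) (M : bLatticeType dM) (f : forall i, L i -> M),
     (forall i, is_0hom (f i)) ->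
     exists g : C -> M,
       (is_0hom g /\ forall i x, g (e i x) = f i x) /\
       (forall g' : C -> M, is_0hom g' -> (forall i x, g' (e i x) = f i x) ->
          forall c, g' c = g c)).

Section Ideals.
Context (d : Order.disp_t) (L : bLatticeType d).

Definition is_ideal (A : L -> Prop) : Prop :=
  [/\ exists x, A x,
      (forall x y, x <= y -> A y -> A x) &
      (forall x y, A x -> A y -> A (x `|` y))].

Definition ideal := {A : L -> Prop | is_ideal A}.

Definition ideal_set (X : ideal) : L -> Prop := proj1_sig X.

Lemma ideal_bot (X : ideal) : ideal_set X \bot.
Proof.
case: X => A [[x Ax] low _] /=; exact: (low _ _ (le0x x) Ax).
Qed.

Lemma ideal_low (X : ideal) x y : x <= y -> ideal_set X y -> ideal_set X x.
Proof. by case: X => A [_ low _] /=; apply: low. Qed.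

Lemma ideal_join (X : ideal) x y :
  ideal_set X x -> ideal_set X y -> ideal_set X (x `|` y).
Proof. by case: X => A [_ _ jn] /=; apply: jn. Qed.

Lemma ideal_ext (X Y : ideal) :
  (forall x, ideal_set X x <-> ideal_set Y x) -> X = Y.
Proof.
case: X Y => [A HA] [B HB] /= H.
have AB : A = B by apply: funext => x; apply: propext.
subst B; congr exist; exact: Prop_irrelevance.
Qed.

HB.instance Definition _ := gen_eqMixin ideal.
HB.instance Definition _ := gen_choiceMixin ideal.

Definition ideal_le (X Y : ideal) : bool :=
  `[< forall x, ideal_set X x -> ideal_set Y x >].
Definition ideal_lt (X Y : ideal) : bool := (Y != X) && ideal_le X Y.

Lemma ideal_le_refl : reflexive ideal_le.
Proof. by move=> X; apply/asboolP. Qed.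

Lemma ideal_le_anti : antisymmetric ideal_le.
Proof.
move=> X Y /andP[/asboolP XY /asboolP YX]; apply: ideal_ext => x; split.
  exact: XY.
exact: YX.
Qed.

Lemma ideal_le_trans : transitive ideal_le.
Proof.
move=> Y X Z /asboolP XY /asboolP YZ; apply/asboolP => x Xx.
exact/YZ/XY.
Qed.

Fact ideal_display : Order.disp_t. Proof. exact: Order.Disp tt tt. Qed.

HB.instance Definition _ :=
  Order.isPOrder.Build ideal_display ideal (fun _ _ => erefl) ideal_le_refl
    ideal_le_anti ideal_le_trans.

Definition ideal_meet_set (X Y : ideal) : L -> Prop :=
  fun z => ideal_set X z /\ ideal_set Y z.

Lemma ideal_meet_is_ideal X Y : is_ideal (ideal_meet_set X Y).
Proof.
split.
- by exists \bot; split; apply: ideal_bot.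
- by move=> x y xy [Xy Yy]; split; apply: ideal_low xy _.
- by move=> x y [Xx Yx] [Xy Yy]; split; apply: ideal_join.
Qed.

Definition ideal_meet X Y : ideal := exist _ _ (ideal_meet_is_ideal X Y).

Definition ideal_join_set (X Y : ideal) : L -> Prop :=
  fun z => exists x y, [/\ ideal_set X x, ideal_set Y y & z <= x `|` y].

Lemma ideal_join_is_ideal X Y : is_ideal (ideal_join_set X Y).
Proof.
split.
- by exists \bot, \bot, \bot; split; rewrite ?le0x //; apply: ideal_bot.
- move=> z w zw [x [y [Xx Yy wxy]]]; exists x, y; split => //.
  exact: le_trans wxy.
- move=> z w [x [y [Xx Yy zxy]]] [x' [y' [Xx' Yy' wxy']]].
  exists (x `|` x'), (y `|` y'); split; try exact: ideal_join.
  have H1 : forall a b : L, a <= a `|` b := fun a b => leUl a b.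
  have H2 : forall a b : L, b <= a `|` b := fun a b => leUr b a.
  rewrite leUx; apply/andP; split.
    apply: (le_trans zxy); apply: leU2; [exact: H1 | exact: H1].
  apply: (le_trans wxy'); apply: leU2; [exact: H2 | exact: H2].
Qed.

Definition ideal_joinI X Y : ideal := exist _ _ (ideal_join_is_ideal X Y).

Lemma ideal_meetP (X Y Z : ideal) :
  (X <= ideal_meet Y Z) = (X <= Y) && (X <= Z).
Proof.
apply/asboolP/andP => [H|[/asboolP XY /asboolP XZ]].
  by split; apply/asboolP => x /H [].
by move=> x Xx; split; [apply: XY | apply: XZ].
Qed.

Lemma ideal_joinP (X Y Z : ideal) :
  (ideal_joinI X Y <= Z) = (X <= Z) && (Y <= Z).
Proof.
apply/asboolP/andP => [H|[/asboolP XZ /asboolP YZ]].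
  split; apply/asboolP => x Hx; apply: H.
    by exists x, \bot; split; rewrite ?joinx0 //; apply: ideal_bot.
  by exists \bot, x; split; rewrite ?join0x //; apply: ideal_bot.
move=> z [x [y [Xx Yy zxy]]]; apply: ideal_low zxy _.
by apply: ideal_join; [apply: XZ | apply: YZ].
Qed.

HB.instance Definition _ :=
  Order.POrder_MeetJoin_isLattice.Build ideal_display ideal ideal_meetP ideal_joinP.

Definition ideal_zero_set : L -> Prop := fun z => z = \bot.

Lemma ideal_zero_is_ideal : is_ideal ideal_zero_set.
Proof.
split.
- by exists \bot.
- move=> x y xy yb; rewrite yb in xy; apply/eqP; by rewrite -lex0.
- by move=> x y xb yb; rewrite /ideal_zero_set xb yb joinx0.
Qed.

Definition ideal_zero : ideal := exist _ _ ideal_zero_is_ideal.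

Lemma ideal_le0x (X : ideal) : ideal_zero <= X.
Proof. by apply/asboolP => x /= ->; apply: ideal_bot. Qed.

HB.instance Definition _ :=
  Order.hasBottom.Build ideal_display ideal ideal_le0x.

End Ideals.

Notation Id K := (ideal K).

Definition eps_set (d d' : Order.disp_t) (K : bLatticeType d)
    (L : bLatticeType d') (e : K -> L) (X : Id K) : L -> Prop :=
  fun y => exists x, ideal_set X x /\ y <= e x.

(* Write [V p] for the value in [C] of a term [p] over the ideal lattices, and
   call a selector a choice of an element in every ideal of every [L i].  The
   ideal [eps (V p)] of [L] is generated by the values in [L] of the instances
   of [p] under all selectors, so [eps (V p) <= eps (V q)] means that every
   instance of [p] lies below some instance of [q].  Comparisons in a free
   0-product are decided by Whitman's conditions together with the upper and
   lower covers of a term in each component; since selectors form a directed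
   set and a term mentions finitely many components, the alternative of
   Whitman's conditions used to compare the instances can be chosen
   uniformly, which yields [V p <= V q] by induction on [p] and [q].  Every
   element of [C] being the value of a term, [eps] is an order embedding. *)

From HB Require Import structures.
From mathcomp Require Import all_boot all_order.
From mathcomp Require Import boolp.
From Stdlib Require List.

Set Implicit Arguments.
Unset Strict Implicit.
Unset Printing Implicit Defensive.
Import Order.Theory.
Local Open Scope order_scope.

Lemma is_0hom_mono (d1 d2 : Order.disp_t) (A : bLatticeType d1)
    (B : bLatticeType d2) (f : A -> B) :
  is_0hom f -> {homo f : x y / x <= y}.
Proof.
case=> _ _ fU x y /join_idPr <-; by rewrite fU leUl.
Qed.

Section OptionTop.
Context (d : Order.disp_t) (T : bLatticeType d).

(* [None] is a top element adjoined to [T]. *)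
Definition ole (a b : option T) : Prop :=
  match b, a with
  | None, _ => True
  | Some _, None => False
  | Some y, Some x => x <= y
  end.

Definition ojoin (a b : option T) : option T :=
  match a, b with Some x, Some y => Some (x `|` y) | _, _ => None end.

Definition omeet (a b : option T) : option T :=
  match a, b with
  | Some x, Some y => Some (x `&` y)
  | Some x, None | None, Some x => Some x
  | None, None => None
  end.

Lemma ole_refl a : ole a a.
Proof. by case: a => //= a. Qed.

Lemma ole_trans a b c : ole a b -> ole b c -> ole a c.
Proof.
by case: c => [c|] //; case: b => [b|] //; case: a => [a|] //=; apply: le_trans.
Qed.

Lemma ole0x a : ole (Some \bot) a.
Proof. by case: a => //= a; rewrite le0x. Qed.

Lemma ole_None a : ole None a -> a = None.
Proof. by case: a. Qed.

Lemma olex0 a : ole a (Some \bot) -> a = Some \bot.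
Proof. by case: a => //= a; rewrite lex0 => /eqP ->. Qed.

Lemma oleUl a b : ole a (ojoin a b).
Proof. by case: a => [a|]; case: b => [b|] //=; rewrite leUl. Qed.

Lemma oleUr a b : ole b (ojoin a b).
Proof. by case: a => [a|]; case: b => [b|] //=; rewrite leUr. Qed.

Lemma oleUx a b c : ole a c -> ole b c -> ole (ojoin a b) c.
Proof.
by case: c => [c|] //; case: a => [a|]; case: b => [b|] //= ac bc; rewrite leUx ac bc.
Qed.

Lemma oleIl a b : ole (omeet a b) a.
Proof. by case: a => [a|]; case: b => [b|] //=; rewrite ?leIl ?lexx. Qed.

Lemma oleIr a b : ole (omeet a b) b.
Proof. by case: a => [a|]; case: b => [b|] //=; rewrite ?leIr ?lexx. Qed.

Lemma olexI a b c : ole c a -> ole c b -> ole c (omeet a b).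
Proof.
by case: a => [a|]; case: b => [b|]; case: c => [c|] //= ca cb; rewrite lexI ca cb.
Qed.

Lemma oleU2 a b a' b' : ole a a' -> ole b b' -> ole (ojoin a b) (ojoin a' b').
Proof.
move=> aa bb; apply: oleUx.
  exact: ole_trans aa (oleUl _ _).
exact: ole_trans bb (oleUr _ _).
Qed.

Lemma oleI2 a b a' b' : ole a a' -> ole b b' -> ole (omeet a b) (omeet a' b').
Proof.
move=> aa bb; apply: olexI.
  exact: ole_trans (oleIl _ _) aa.
exact: ole_trans (oleIr _ _) bb.
Qed.

Lemma ojoin_eq0 a b : ojoin a b = Some \bot -> a = Some \bot /\ b = Some \bot.
Proof.
case: a => [a|]; case: b => [b|] //= [] /eqP; rewrite -lex0 leUx !lex0.
by case/andP => /eqP -> /eqP ->.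
Qed.

Lemma omeetC a b : omeet a b = omeet b a.
Proof. by case: a => [a|]; case: b => [b|] //=; rewrite meetC. Qed.

Lemma omeetNo b : omeet None b = b.
Proof. by case: b. Qed.

Lemma omeet0o b : omeet (Some \bot) b = Some \bot.
Proof. by case: b => //= b; rewrite meet0x. Qed.

Lemma omeeto0 a : omeet a (Some \bot) = Some \bot.
Proof. by case: a => //= a; rewrite meetx0. Qed.

End OptionTop.

Section FreeTerms.
Context (I : Type) (d : I -> Order.disp_t) (L : forall i, bLatticeType (d i)).

Inductive term := Gen (i : I) (x : L i) | Join (p q : term) | Meet (p q : term).

Definition recast i (x : L i) k : option (L k) :=
  match pselect (i = k) with
  | left e => Some (@eq_rect I i (fun j => L j : Type) x k e)
  | right _ => None
  end.

Lemma recast_id i (x : L i) : recast x i = Some x.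
Proof.
by rewrite /recast; case: pselect => [e|//]; rewrite (Prop_irrelevance e erefl).
Qed.

Lemma recast_neq i k (x : L i) : i <> k -> recast x k = None.
Proof. by rewrite /recast; case: pselect. Qed.

(* In the free 0-product, [ucov p k] is the least element of [L k] above [p]
   ([None] if there is none) and [lcov p k] the greatest one below [p].  The
   zeros of all [L k] are identified, hence the special treatment of [\bot]
   and of meets whose upper cover is [\bot] at some index. *)
Fixpoint ucov (p : term) : forall k, option (L k) :=
  match p with
  | Gen i x => fun k => if x == \bot then Some \bot else recast x k
  | Join p q => fun k => ojoin (ucov p k) (ucov q k)
  | Meet p q => fun k =>
      if pselect (exists k', omeet (ucov p k') (ucov q k') = Some \bot)
      then Some \bot else omeet (ucov p k) (ucov q k)
  end.

Fixpoint lcov (p : term) : forall k, L k :=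
  match p with
  | Gen i x => fun k => odflt \bot (recast x k)
  | Join p q => fun k => lcov p k `|` lcov q k
  | Meet p q => fun k => lcov p k `&` lcov q k
  end.

Lemma lcov_gen i (x : L i) : lcov (Gen x) i = x.
Proof. by rewrite /= recast_id. Qed.

Lemma ucov_gen_le i (x : L i) : ole (ucov (Gen x) i) (Some x).
Proof. by rewrite /=; case: eqP => [->|_]; rewrite ?recast_id /=. Qed.

Lemma ucov_meet_le p q k : ole (ucov (Meet p q) k) (omeet (ucov p k) (ucov q k)).
Proof. by rewrite /=; case: pselect => ?; [apply: ole0x | apply: ole_refl]. Qed.

Lemma ucov_meet_zero p q k :
  (exists k', omeet (ucov p k') (ucov q k') = Some \bot) ->
  ucov (Meet p q) k = Some \bot.
Proof. by rewrite /=; case: pselect. Qed.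

Lemma ucov_meet_nonzero p q k :
  ~ (exists k', omeet (ucov p k') (ucov q k') = Some \bot) ->
  ucov (Meet p q) k = omeet (ucov p k) (ucov q k).
Proof. by rewrite /=; case: pselect. Qed.

Lemma ucov_meet_zeroP p q k :
  ucov (Meet p q) k = Some \bot ->
  exists k', omeet (ucov p k') (ucov q k') = Some \bot.
Proof.
have [//|nz] := pselect (exists k', omeet (ucov p k') (ucov q k') = Some \bot).
by rewrite ucov_meet_nonzero // => h; exists k.
Qed.

Definition zero_term p := forall k, ucov p k = Some \bot.

Lemma ucov_zero_term p k : ucov p k = Some \bot -> zero_term p.
Proof.
elim: p k => [i x|p IHp q IHq|p IHp q IHq] k Hk k'.
- move: Hk => /=; case: eqP => // xb.
  have [<-|ik] := pselect (i = k); last by rewrite recast_neq.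
  by rewrite recast_id => -[].
- by move: Hk => /= /ojoin_eq0 [/IHp zp /IHq zq]; rewrite /= zp zq /= joinx0.
- have [z|nz] := pselect (exists k', omeet (ucov p k') (ucov q k') = Some \bot).
    exact: ucov_meet_zero.
  by move: Hk; rewrite ucov_meet_nonzero // => Hk; case: nz; exists k.
Qed.

Lemma lcov_ucov p :
  (forall k, ole (Some (lcov p k)) (ucov p k)) /\
  (forall j k, j <> k -> lcov p j != \bot -> ucov p k = None).
Proof.
elim: p => [i x|p [C1 D1] q [C2 D2]|p [C1 D1] q [C2 D2]].
- split=> [k|j k jk] /=.
    have [<-|ik] := pselect (i = k).
      by rewrite recast_id; case: eqP => [->|_]; apply: ole_refl.
    by rewrite recast_neq //; case: eqP => [_|_]; rewrite /= ?lexx.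
  have [ij|ij] := pselect (i = j); last by rewrite recast_neq ?eqxx.
  subst j; rewrite recast_id => /negbTE ->; exact: recast_neq.
- split=> [k|j k jk /=]; first exact: (oleU2 (C1 k) (C2 k)).
  have [->|h1] := eqVneq (lcov p j) \bot.
    by rewrite join0x => /(D2 _ _ jk) ->; case: (ucov p k).
  by rewrite (D1 j k jk h1).
- have C3 k : ole (Some (lcov (Meet p q) k)) (ucov (Meet p q) k).
    have [[k' hk']|nz] :=
      pselect (exists k', omeet (ucov p k') (ucov q k') = Some \bot); last first.
      by rewrite ucov_meet_nonzero //; exact: (oleI2 (C1 k) (C2 k)).
    rewrite ucov_meet_zero; last by exists k'.
    have [kk'|kk'] := pselect (k = k').
      by subst k'; have := oleI2 (C1 k) (C2 k); rewrite hk'.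
    rewrite /= lex0; apply/eqP.
    have [->|h1] := eqVneq (lcov p k) \bot; first by rewrite meet0x.
    have [->|h2] := eqVneq (lcov q k) \bot; first by rewrite meetx0.
    by move: hk'; rewrite (D1 k k' kk' h1) (D2 k k' kk' h2).
  split=> // j k jk hpq.
  have h1 : lcov p j != \bot by apply: contraNneq hpq => /= ->; rewrite meet0x.
  have h2 : lcov q j != \bot by apply: contraNneq hpq => /= ->; rewrite meetx0.
  have [z|nz] := pselect (exists k', omeet (ucov p k') (ucov q k') = Some \bot).
    by move: (C3 j) hpq; rewrite ucov_meet_zero //= lex0 => ->.
  by rewrite ucov_meet_nonzero // (D1 j k jk h1) (D2 j k jk h2).
Qed.

Lemma lcov_le_ucov p k : ole (Some (lcov p k)) (ucov p k).
Proof. exact: (lcov_ucov p).1. Qed.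

Lemma ucov_None p j k : j <> k -> lcov p j != \bot -> ucov p k = None.
Proof. exact: (lcov_ucov p).2. Qed.

Lemma zero_term_lcov p k : zero_term p -> lcov p k = \bot.
Proof. by move=> z; apply/eqP; have := lcov_le_ucov p k; rewrite z /= lex0. Qed.

(* Whitman's conditions, plus the cover condition which encodes the order of
   the components. *)
Inductive tle : term -> term -> Prop :=
  | tle_joinl p0 p1 q : tle p0 q -> tle p1 q -> tle (Join p0 p1) q
  | tle_meetl0 p0 p1 q : tle p0 q -> tle (Meet p0 p1) q
  | tle_meetl1 p0 p1 q : tle p1 q -> tle (Meet p0 p1) q
  | tle_joinr0 p q0 q1 : tle p q0 -> tle p (Join q0 q1)
  | tle_joinr1 p q0 q1 : tle p q1 -> tle p (Join q0 q1)
  | tle_meetr p q0 q1 : tle p q0 -> tle p q1 -> tle p (Meet q0 q1)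
  | tle_cover p q k : ole (ucov p k) (Some (lcov q k)) -> tle p q.

Lemma ucov_meet_glb p q0 q1 k :
  (forall k, ole (ucov p k) (ucov q0 k)) -> (forall k, ole (ucov p k) (ucov q1 k)) ->
  ole (ucov p k) (ucov (Meet q0 q1) k).
Proof.
move=> h0 h1.
have [[k' hk']|nz] := pselect (exists k', omeet (ucov q0 k') (ucov q1 k') = Some \bot);
  last by rewrite ucov_meet_nonzero //; exact: olexI.
have := olexI (h0 k') (h1 k'); rewrite hk' => /olex0/ucov_zero_term zp.
by rewrite zp ucov_meet_zero //; [apply: ole_refl | exists k'].
Qed.

Lemma tle_covers p q : tle p q ->
  forall k, ole (ucov p k) (ucov q k) /\ lcov p k <= lcov q k.
Proof.
elim=> {p q} [p0 p1 q _ H0 _ H1|p0 p1 q _ H0|p0 p1 q _ H0|p q0 q1 _ H0|p q0 q1 _ H0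
             |p q0 q1 _ H0 _ H1|p q k0 H] k /=.
- split; last by rewrite leUx (H0 k).2 (H1 k).2.
  by apply: oleUx; [exact: (H0 k).1 | exact: (H1 k).1].
- split; last exact: le_trans (leIl _ _) (H0 k).2.
  exact: ole_trans (ucov_meet_le _ _ _) (ole_trans (oleIl _ _) (H0 k).1).
- split; last exact: le_trans (leIr _ _) (H0 k).2.
  exact: ole_trans (ucov_meet_le _ _ _) (ole_trans (oleIr _ _) (H0 k).1).
- split; first exact: ole_trans (H0 k).1 (oleUl _ _).
  exact: le_trans (H0 k).2 (leUl _ _).
- split; first exact: ole_trans (H0 k).1 (oleUr _ _).
  exact: le_trans (H0 k).2 (leUr _ _).
- split; last by rewrite lexI (H0 k).2 (H1 k).2.
  by apply: ucov_meet_glb => k'; [exact: (H0 k').1 | exact: (H1 k').1].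
- case E: (ucov p k0) H => [a|] //= ha.
  have [a0|anz] := eqVneq a \bot.
    have z := ucov_zero_term (etrans E (congr1 Some a0)).
    by rewrite z (zero_term_lcov k z); split; [exact: ole0x | exact: le0x].
  have lq : lcov q k0 != \bot by apply: contraNneq anz => lq0; rewrite -lex0 -lq0.
  have [kk0|kk0] := pselect (k = k0).
    subst k; split; first by rewrite E; exact: ole_trans (lcov_le_ucov q k0).
    by have := lcov_le_ucov p k0; rewrite E /= => /le_trans; apply.
  split; first by rewrite (ucov_None (nesym kk0) lq).
  have [->|lp] := eqVneq (lcov p k) \bot; first exact: le0x.
  by move: E; rewrite (ucov_None kk0 lp).
Qed.

Lemma tle_refl p : tle p p.
Proof.
elim: p => [i x|p IHp q IHq|p IHp q IHq].
- by apply: (@tle_cover _ _ i); rewrite lcov_gen; exact: ucov_gen_le.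
- by apply: tle_joinl; [apply: tle_joinr0 | apply: tle_joinr1].
- by apply: tle_meetr; [apply: tle_meetl0 | apply: tle_meetl1].
Qed.

Lemma tle_join_inv p0 p1 q : tle (Join p0 p1) q -> tle p0 q /\ tle p1 q.
Proof.
move E: (Join p0 p1) => p H; elim: H p0 p1 E => {p q}
  [p0' p1' q h0 _ h1 _|||p q0 q1 _ IH|p q0 q1 _ IH|p q0 q1 _ IH0 _ IH1|p q k hk]
  p0 p1 E //.
- by case: E => -> ->; split.
- by have [] := IH _ _ E; split; apply: tle_joinr0.
- by have [] := IH _ _ E; split; apply: tle_joinr1.
- by have [] := IH0 _ _ E; have [] := IH1 _ _ E; split; apply: tle_meetr.
- subst p; split; apply: (@tle_cover _ _ k).
    exact: ole_trans (oleUl _ _) hk.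
  exact: ole_trans (oleUr _ _) hk.
Qed.

Lemma tle_meet_trans p q0 q1 :
  tle p q0 -> tle p q1 ->
  (forall r, tle q0 r -> tle p r) -> (forall r, tle q1 r -> tle p r) ->
  forall r, tle (Meet q0 q1) r -> tle p r.
Proof.
move=> H0 H1 IH0 IH1 r; move E: (Meet q0 q1) => m H; elim: H E => {m r}
  [|m0 m1 r h _|m0 m1 r h _|m r0 r1 _ IH|m r0 r1 _ IH|m r0 r1 _ IHa _ IHb|m r k hk]
  E //.
- by case: E => e _; subst; apply: IH0.
- by case: E => _ e; subst; apply: IH1.
- by apply: tle_joinr0; apply: IH.
- by apply: tle_joinr1; apply: IH.
- by apply: tle_meetr; [apply: IHa | apply: IHb].
- subst m; apply: (@tle_cover _ _ k); apply: ole_trans hk.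
  apply: ucov_meet_glb => k'.
    exact: (tle_covers H0 k').1.
  exact: (tle_covers H1 k').1.
Qed.

Lemma tle_trans p q r : tle p q -> tle q r -> tle p r.
Proof.
move=> H; elim: H r => {p q}.
- by move=> p0 p1 q _ IH0 _ IH1 r Hr; apply: tle_joinl; [apply: IH0 | apply: IH1].
- by move=> p0 p1 q _ IH r Hr; apply: tle_meetl0; apply: IH.
- by move=> p0 p1 q _ IH r Hr; apply: tle_meetl1; apply: IH.
- by move=> p q0 q1 _ IH r /tle_join_inv [Hr _]; apply: IH.
- by move=> p q0 q1 _ IH r /tle_join_inv [_ Hr]; apply: IH.
- by move=> p q0 q1 H0 IH0 H1 IH1 r; apply: tle_meet_trans.
- move=> p q k Hk r Hr; apply: (@tle_cover _ _ k).
  apply: ole_trans Hk _ => /=; exact: (tle_covers Hr k).2.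
Qed.

End FreeTerms.

Section Evaluation.
Context (I : Type) (d : I -> Order.disp_t) (L : forall i, bLatticeType (d i)).
Context (dM : Order.disp_t) (M : bLatticeType dM) (f : forall i, L i -> M).
Hypothesis f0hom : forall i, is_0hom (@f i).

Fixpoint teval (p : term L) : M :=
  match p with
  | @Gen _ _ _ i x => f x
  | Join p q => teval p `|` teval q
  | Meet p q => teval p `&` teval q
  end.

Lemma lcov_le_teval p k : f (lcov p k) <= teval p.
Proof.
have [f0 fI fU] := f0hom k.
elim: p => [i x|p IHp q IHq|p IHp q IHq] /=; last 2 first.
- by rewrite fU leU2.
- by rewrite fI leI2.
have [<-|ik] := pselect (i = k); first by rewrite recast_id.
by rewrite recast_neq //= f0 le0x.
Qed.

Lemma teval_le_omeet p q k a :
  (forall a, ucov p k = Some a -> teval p <= f a) ->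
  (forall a, ucov q k = Some a -> teval q <= f a) ->
  omeet (ucov p k) (ucov q k) = Some a -> teval p `&` teval q <= f a.
Proof.
move=> Hp Hq; have [_ fI _] := f0hom k.
case Ep: (ucov p k) => [b|]; case Eq: (ucov q k) => [c|] //= [<-].
- by rewrite fI leI2 ?Hp ?Hq.
- exact: le_trans (leIl _ _) (Hp _ Ep).
- exact: le_trans (leIr _ _) (Hq _ Eq).
Qed.

Lemma teval_le_ucov p k a : ucov p k = Some a -> teval p <= f a.
Proof.
elim: p k a => [i x|p IHp q IHq|p IHp q IHq] k a /=.
- case: eqP => [->|_].
    by move=> [<-]; have [-> _ _] := f0hom i; have [-> _ _] := f0hom k.
  have [ik|ik] := pselect (i = k); last by rewrite recast_neq.
  by subst k; rewrite recast_id => -[<-].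
- case Ep: (ucov p k) => [b|]; case Eq: (ucov q k) => [c|] //= [<-].
  by have [_ _ ->] := f0hom k; rewrite leU2 ?IHp ?IHq.
- case: pselect => [[k' hk'] [<-]|nz]; last exact: (teval_le_omeet (IHp k) (IHq k)).
  have [f0 _ _] := f0hom k; have [f0' _ _] := f0hom k'.
  by have := teval_le_omeet (IHp k') (IHq k') hk'; rewrite f0 f0'.
Qed.

Lemma tle_teval p q : tle p q -> teval p <= teval q.
Proof.
elim=> {p q} /=.
- by move=> *; rewrite leUx; apply/andP.
- by move=> p0 p1 q _ h; apply: le_trans (leIl _ _) h.
- by move=> p0 p1 q _ h; apply: le_trans (leIr _ _) h.
- by move=> p q0 q1 _ h; apply: le_trans h (leUl _ _).
- by move=> p q0 q1 _ h; apply: le_trans h (leUr _ _).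
- by move=> *; rewrite lexI; apply/andP.
- move=> p q k; case E: (ucov p k) => [a|] //= ha.
  apply: le_trans (teval_le_ucov E) (le_trans _ (lcov_le_teval q k)).
  exact: is_0hom_mono (f0hom k) _ _ ha.
Qed.

End Evaluation.

Section TermLattice.
Context (I : Type) (d : I -> Order.disp_t) (L : forall i, bLatticeType (d i)).

Definition teqv (p q : term L) := tle p q /\ tle q p.

(* Classes of terms, as predicates.  The index is unused: it only lets the
   bottom element [tclass (Gen (\bot : L i0))] be a canonical instance. *)
Definition fterm (_ : I) : Type := {A : term L -> Prop | exists p, A = teqv p}.

Variable i0 : I.

Definition tclass (p : term L) : fterm i0 := exist _ (teqv p) (ex_intro _ p erefl).
Definition trepr (A : fterm i0) : term L := proj1_sig (cid (proj2_sig A)).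

Lemma treprK : cancel trepr tclass.
Proof.
case=> P hP; rewrite /trepr /=; case: cid => p /= e; subst P.
by rewrite /tclass; congr exist; exact: Prop_irrelevance.
Qed.

Lemma tclass_eq p q : teqv p q -> tclass p = tclass q.
Proof.
move=> [pq qp]; rewrite /tclass.
have E : teqv p = teqv q.
  apply: funext => r; apply: propext; split=> -[h1 h2]; split.
  - exact: tle_trans qp h1.
  - exact: tle_trans h2 pq.
  - exact: tle_trans pq h1.
  - exact: tle_trans h2 qp.
move: (ex_intro _ p _) (ex_intro _ q _); rewrite E => h1 h2.
by congr exist; exact: Prop_irrelevance.
Qed.

Lemma trepr_teqv p : teqv (trepr (tclass p)) p.
Proof.
rewrite /trepr /=; case: cid => r /= e.
have : teqv p p by split; apply: tle_refl.
by rewrite e.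
Qed.

Lemma tle_reprr p q : tle p (trepr (tclass q)) <-> tle p q.
Proof.
have [h1 h2] := trepr_teqv q.
by split => h; [exact: tle_trans h h1 | exact: tle_trans h h2].
Qed.

Lemma tle_reprl p q : tle (trepr (tclass p)) q <-> tle p q.
Proof.
have [h1 h2] := trepr_teqv p.
by split => h; [exact: tle_trans h2 h | exact: tle_trans h1 h].
Qed.

HB.instance Definition _ := gen_eqMixin (fterm i0).
HB.instance Definition _ := gen_choiceMixin (fterm i0).

Definition fterm_le (A B : fterm i0) : bool := `[< tle (trepr A) (trepr B) >].

Lemma fterm_le_refl : reflexive fterm_le.
Proof. by move=> A; apply/asboolP; apply: tle_refl. Qed.

Lemma fterm_le_anti : antisymmetric fterm_le.
Proof.
move=> A B /andP[/asboolP h1 /asboolP h2].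
by rewrite -(treprK A) -(treprK B); apply: tclass_eq.
Qed.

Lemma fterm_le_trans : transitive fterm_le.
Proof.
by move=> B A C /asboolP h1 /asboolP h2; apply/asboolP; apply: tle_trans h1 h2.
Qed.

Fact fterm_display : Order.disp_t. Proof. exact: Order.Disp tt tt. Qed.

HB.instance Definition _ := Order.isPOrder.Build fterm_display (fterm i0)
  (fun _ _ => erefl) fterm_le_refl fterm_le_anti fterm_le_trans.

Lemma le_tclass p q : (tclass p <= tclass q) <-> tle p q.
Proof. by rewrite -tle_reprl -tle_reprr; split => /asboolP. Qed.

Definition fterm_meet (A B : fterm i0) := tclass (Meet (trepr A) (trepr B)).
Definition fterm_join (A B : fterm i0) := tclass (Join (trepr A) (trepr B)).

Lemma fterm_meetP (A B C : fterm i0) :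
  (A <= fterm_meet B C) = (A <= B) && (A <= C).
Proof.
apply/asboolP/andP; rewrite /fterm_meet tle_reprr.
  move=> h; split; apply/asboolP.
    exact: tle_trans h (tle_meetl0 _ (tle_refl _)).
  exact: tle_trans h (tle_meetl1 _ (tle_refl _)).
by move=> [/asboolP h1 /asboolP h2]; apply: tle_meetr.
Qed.

Lemma fterm_joinP (A B C : fterm i0) :
  (fterm_join A B <= C) = (A <= C) && (B <= C).
Proof.
apply/asboolP/andP; rewrite /fterm_join tle_reprl.
  move=> h; split; apply/asboolP.
    exact: tle_trans (tle_joinr0 _ (tle_refl _)) h.
  exact: tle_trans (tle_joinr1 _ (tle_refl _)) h.
by move=> [/asboolP h1 /asboolP h2]; apply: tle_joinl.
Qed.

HB.instance Definition _ := Order.POrder_MeetJoin_isLattice.Build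
  fterm_display (fterm i0) fterm_meetP fterm_joinP.

Lemma tle_gen0 i p : tle (Gen (\bot : L i)) p.
Proof. by apply: (@tle_cover _ _ _ _ _ i); rewrite /= eqxx le0x. Qed.

Lemma fterm_le0x (A : fterm i0) : tclass (Gen (\bot : L i0)) <= A.
Proof. by apply/asboolP; rewrite tle_reprl; apply: tle_gen0. Qed.

HB.instance Definition _ := Order.hasBottom.Build fterm_display (fterm i0) fterm_le0x.

Lemma meet_tclass p q : tclass p `&` tclass q = tclass (Meet p q).
Proof.
apply: tclass_eq; have [a b] := trepr_teqv p; have [a' b'] := trepr_teqv q.
by split; apply: tle_meetr;
  [apply: tle_meetl0 | apply: tle_meetl1 | apply: tle_meetl0 | apply: tle_meetl1].
Qed.

Lemma join_tclass p q : tclass p `|` tclass q = tclass (Join p q).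
Proof.
apply: tclass_eq; have [a b] := trepr_teqv p; have [a' b'] := trepr_teqv q.
by split; apply: tle_joinl;
  [apply: tle_joinr0 | apply: tle_joinr1 | apply: tle_joinr0 | apply: tle_joinr1].
Qed.

Lemma tclass_gen_0hom i : is_0hom (fun x : L i => tclass (Gen x)).
Proof.
split.
- by apply/esym/tclass_eq; split; apply: tle_gen0.
- move=> x y; rewrite meet_tclass; apply: tclass_eq; split.
    apply: tle_meetr; apply: (@tle_cover _ _ _ _ _ i); rewrite lcov_gen;
      apply: ole_trans (ucov_gen_le _) _; [exact: leIl | exact: leIr].
  apply: (@tle_cover _ _ _ _ _ i); rewrite lcov_gen.
  exact: ole_trans (ucov_meet_le _ _ _) (oleI2 (ucov_gen_le x) (ucov_gen_le y)).
- move=> x y; rewrite join_tclass; apply: tclass_eq; split.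
    apply: (@tle_cover _ _ _ _ _ i).
    have -> : lcov (Join (Gen x) (Gen y)) i = x `|` y by rewrite /= !recast_id.
    exact: ucov_gen_le.
  apply: tle_joinl; apply: (@tle_cover _ _ _ _ _ i); rewrite lcov_gen;
    apply: ole_trans (ucov_gen_le _) _; [exact: leUl | exact: leUr].
Qed.

End TermLattice.

Section Coproduct.
Context (I : Type) (d : I -> Order.disp_t) (L : forall i, bLatticeType (d i)).
Context (dC : Order.disp_t) (C : bLatticeType dC) (c : forall i, L i -> C).
Hypothesis Cc : is_coproduct0 c.

Lemma teval_tclass (i0 : I) (h : C -> fterm L i0) :
  is_0hom h -> (forall i (x : L i), h (c x) = tclass i0 (Gen x)) ->
  forall p, h (teval c p) = tclass i0 p.
Proof.
move=> [_ hI hU] hc; elim=> [i x|p IHp q IHq|p IHp q IHq] /=.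
- exact: hc.
- by rewrite hU IHp IHq join_tclass.
- by rewrite hI IHp IHq meet_tclass.
Qed.

Lemma coproduct_tle (i0 : I) p q : teval c p <= teval c q -> tle p q.
Proof.
have [h [[h0hom hc] _]] := Cc.2 _ (fterm L i0) _ (@tclass_gen_0hom _ _ L i0).
move=> /(is_0hom_mono h0hom); rewrite !(teval_tclass h0hom hc).
by move/le_tclass.
Qed.

Lemma teval_trepr (i0 : I) p : teval c (trepr (tclass i0 p)) = teval c p.
Proof.
by have [h1 h2] := trepr_teqv i0 p; apply/le_anti; rewrite !tle_teval //; apply: Cc.1.
Qed.

(* The composite [C -> fterm -> C] is a 0-homomorphism fixing the
   generators, hence the identity. *)
Lemma coproduct_generated (i0 : I) (a : C) : exists p, a = teval c p.
Proof.
have [h [[[h0 hI hU] hc] _]] := Cc.2 _ (fterm L i0) _ (@tclass_gen_0hom _ _ L i0).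
have [g [_ g_uniq]] := Cc.2 _ C c Cc.1.
pose back (A : fterm L i0) := teval c (trepr A).
have back_0hom : is_0hom (back \o h).
  have backE p : back (tclass i0 p) = teval c p by exact: teval_trepr.
  have [c0 _ _] := Cc.1 i0.
  split=> [|x y|x y] /=; rewrite ?h0 ?hI ?hU.
  - by rewrite /= backE /= c0.
  - by rewrite -[h x]treprK -[h y]treprK meet_tclass !backE.
  - by rewrite -[h x]treprK -[h y]treprK join_tclass !backE.
have back_c i (x : L i) : (back \o h) (c x) = c x by rewrite /= hc /back teval_trepr.
have id_0hom : is_0hom (@id C) by [].
exists (trepr (h a)).
exact: etrans (g_uniq _ id_0hom (fun _ _ => erefl) a)
              (esym (g_uniq _ back_0hom back_c a)).
Qed.

Lemma coproduct0_empty (I0 : I -> False) (a b : C) : a = b.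
Proof.
have [g [_ g_uniq]] := Cc.2 _ C c Cc.1.
have on_c (h : C -> C) i (x : L i) : h (c x) = c x by case: (I0 i).
have id_0hom : is_0hom (@id C) by [].
have bot_0hom : is_0hom (fun _ : C => (\bot : C)).
  by split=> // *; rewrite ?meetxx ?joinxx.
have all_bot (x : C) : x = \bot.
  exact: etrans (g_uniq _ id_0hom (on_c _) x) (esym (g_uniq _ bot_0hom (on_c _) x)).
by rewrite (all_bot a) (all_bot b).
Qed.

End Coproduct.

Section Indices.
Context (I : Type) (d : I -> Order.disp_t) (L : forall i, bLatticeType (d i)).

Fixpoint tidx (p : term L) : list I :=
  match p with
  | @Gen _ _ _ i _ => [:: i]
  | Join p q | Meet p q => tidx p ++ tidx q
  end.

Lemma tidx_nonempty p : exists k, List.In k (tidx p).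
Proof.
elim: p => [i x|p [k hk] q _|p [k hk] q _] /=; first by exists i; left.
all: by exists k; apply: List.in_or_app; left.
Qed.

Lemma ucov_notin_tidx p k :
  ~ List.In k (tidx p) -> ucov p k = None \/ ucov p k = Some \bot.
Proof.
elim: p => [i x|p IHp q IHq|p IHp q IHq] /= hk.
- case: eqP => _; first by right.
  by left; rewrite recast_neq // => ik; apply: hk; left.
- have [hp hq] : ~ List.In k (tidx p) /\ ~ List.In k (tidx q).
    by split=> h; apply: hk; apply: List.in_or_app; [left | right].
  case: (IHp hp) => ->; first by left.
  by case: (IHq hq) => ->; [left | right; rewrite /= joinx0].
- case: pselect => zpq; first by right.
  have [hp hq] : ~ List.In k (tidx p) /\ ~ List.In k (tidx q).
    by split=> h; apply: hk; apply: List.in_or_app; [left | right].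
  by case: (IHp hp) => ->; case: (IHq hq) => -> /=;
    [left | right | right | right; rewrite meetx0].
Qed.

Lemma zero_meet_tidx p q k :
  omeet (ucov p k) (ucov q k) = Some \bot ->
  exists2 k', List.In k' (tidx (Meet p q)) & omeet (ucov p k') (ucov q k') = Some \bot.
Proof.
move=> hk; have [k0 hk0] := tidx_nonempty (Meet p q).
have [kin|kout] := pselect (List.In k (tidx (Meet p q))); first by exists k.
exists k0 => //.
have [hp hq] : ~ List.In k (tidx p) /\ ~ List.In k (tidx q).
  by split=> h; apply: kout; apply: List.in_or_app; [left | right].
case: (ucov_notin_tidx hp) => Ep; case: (ucov_notin_tidx hq) => Eq;
  move: hk; rewrite Ep Eq //= => _.
- by rewrite (ucov_zero_term Eq) omeeto0.
- by rewrite (ucov_zero_term Ep) omeet0o.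
- by rewrite (ucov_zero_term Ep) omeet0o.
Qed.

Lemma tle_meet_join_inv p0 p1 q0 q1 : tle (Meet p0 p1) (Join q0 q1) ->
  tle p0 (Join q0 q1) \/ tle p1 (Join q0 q1) \/ tle (Meet p0 p1) q0 \/
  tle (Meet p0 p1) q1 \/
  exists2 k, List.In k (tidx (Meet p0 p1)) &
    ole (ucov (Meet p0 p1) k) (Some (lcov (Join q0 q1) k)).
Proof.
move=> H; inversion H as [| | | | | |r r' k hk]; subst;
  [by left | by right; left | by do 2 right; left | by do 3 right; left | do 4 right].
have [kin|kout] := pselect (List.In k (tidx (Meet p0 p1))); first by exists k.
have [k0 hk0] := tidx_nonempty (Meet p0 p1); exists k0 => //.
case: (ucov_notin_tidx kout) => E; rewrite E in hk => //.
by rewrite (ucov_zero_term E k0); apply: ole0x.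
Qed.

End Indices.

Section Directed.
Variables (S : Type) (le : S -> S -> Prop) (ub : S -> S -> S).
Hypotheses (le_ubl : forall s t, le s (ub s t)) (le_ubr : forall s t, le t (ub s t)).

Definition down_closed (P : S -> Prop) := forall s t, le s t -> P t -> P s.

Lemma down_closed_or P Q :
  down_closed P -> down_closed Q -> down_closed (fun s => P s \/ Q s).
Proof. by move=> dP dQ s t st [/(dP _ _ st)|/(dQ _ _ st)]; [left | right]. Qed.

(* A failure of [P] at [s1] forces [Q] above [s1], hence everywhere. *)
Lemma directed_or P Q : down_closed P -> down_closed Q ->
  (forall s, P s \/ Q s) -> (forall s, P s) \/ (forall s, Q s).
Proof.
move=> dP dQ PQ.
have [allP|/existsNP [s1 nP1]] := pselect (forall s, P s); first by left.
right=> s; case: (PQ (ub s s1)) => [/(dP _ _ (le_ubr _ _))//|/(dQ _ _ (le_ubl _ _))//].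
Qed.

Lemma directed_exists_in (A : Type) (l : list A) (P : A -> S -> Prop) (s0 : S) :
  (forall a, down_closed (P a)) -> (forall s, exists2 a, List.In a l & P a s) ->
  exists2 a, List.In a l & forall s, P a s.
Proof.
elim: l => [|a l IH] dP H; first by have [] := H s0.
have dl : down_closed (fun s => exists2 b, List.In b l & P b s).
  by move=> s t st [b hb Pb]; exists b => //; apply: dP Pb.
have Hal s : P a s \/ exists2 b, List.In b l & P b s.
  by have [b [<-|hb] Pb] := H s; [left | right; exists b].
have [Pa|Pl] := directed_or (dP a) dl Hal; first by exists a => //; left.
by have [b hb Pb] := IH dP Pl; exists b => //; right.
Qed.

End Directed.

Section Embedding.
Context (I : Type) (d : I -> Order.disp_t) (L : forall i, bLatticeType (d i)).
Context (dL : Order.disp_t) (Lc : bLatticeType dL) (e : forall i, L i -> Lc).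
Context (dC : Order.disp_t) (C : bLatticeType dC) (c : forall i, Id (L i) -> C).
Hypothesis Ce : is_coproduct0 e.
Hypothesis Cc : @is_coproduct0 I (fun _ => ideal_display)
  (fun i => (Id (L i) : bLatticeType ideal_display)) dC C c.
Variable eps : C -> Id Lc.
Hypothesis eps_0hom : is_0hom eps.
Hypothesis epsE : forall i (X : Id (L i)), ideal_set (eps (c X)) = eps_set (@e i) X.
Variable i0 : I.

Local Notation IdL := (fun i => (Id (L i) : bLatticeType ideal_display)).

(* Through [eps], a term over the ideals denotes the ideal generated by the
   values of its instances under all selectors ([inst_in_eps] and
   [in_eps_le_inst]). *)
Definition is_selector (f : forall i, Id (L i) -> L i) :=
  forall i X, ideal_set X (f i X).

Definition selector := {f | is_selector f}.

Implicit Types s t : selector.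

Definition sel_le (s t : selector) := forall i X, sval s i X <= sval t i X.

Definition sel_join (s t : selector) : selector :=
  exist is_selector (fun i X => sval s i X `|` sval t i X)
    (fun i X => ideal_join (proj2_sig s i X) (proj2_sig t i X)).

Definition sel0 : selector :=
  exist is_selector (fun i X => \bot) (fun i X => ideal_bot X).

Lemma sel_le_joinl s t : sel_le s (sel_join s t).
Proof. by move=> i X; rewrite /= leUl. Qed.

Lemma sel_le_joinr s t : sel_le t (sel_join s t).
Proof. by move=> i X; rewrite /= leUr. Qed.

Lemma sel_le_trans s t u : sel_le s t -> sel_le t u -> sel_le s u.
Proof. by move=> st tu i X; apply: le_trans (st i X) (tu i X). Qed.

Fixpoint tsubst (f : forall i, Id (L i) -> L i) (p : term IdL) : term L :=
  match p with
  | @Gen _ _ _ i X => Gen (f i X)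
  | Join p q => Join (tsubst f p) (tsubst f q)
  | Meet p q => Meet (tsubst f p) (tsubst f q)
  end.

Local Notation inst s p := (tsubst (sval s) p).

Lemma tidx_tsubst f p : tidx (tsubst f p) = tidx p.
Proof. by elim: p => //= p -> q ->. Qed.

Lemma teval_inst_mono s t p : sel_le s t -> teval e (inst s p) <= teval e (inst t p).
Proof.
move=> st; elim: p => [i X|p IHp q IHq|p IHp q IHq] /=.
- exact: is_0hom_mono (Ce.1 i) _ _ (st i X).
- exact: leU2.
- exact: leI2.
Qed.

Lemma tle_inst_mono s t p : sel_le s t -> tle (inst s p) (inst t p).
Proof. by move=> st; apply: (coproduct_tle Ce i0); exact: teval_inst_mono. Qed.

Lemma ucov_inst_mono s t p k :
  sel_le s t -> ole (ucov (inst s p) k) (ucov (inst t p) k).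
Proof. by move=> st; have [] := tle_covers (tle_inst_mono p st) k. Qed.

Lemma ucov_inst_None s t p k : sel_le s t ->
  ucov (inst s p) k = None -> ucov (inst t p) k = None.
Proof. by move=> st h; apply: ole_None; rewrite -h; apply: ucov_inst_mono. Qed.

Lemma ucov_inst_le s t p k a b : sel_le s t ->
  ucov (inst s p) k = Some a -> ucov (inst t p) k = Some b -> a <= b.
Proof. by move=> st ha hb; have := ucov_inst_mono p k st; rewrite ha hb. Qed.

Lemma zero_term_inst s t p : sel_le s t -> zero_term (inst t p) -> zero_term (inst s p).
Proof. by move=> st z k; apply: olex0; rewrite -(z k); apply: ucov_inst_mono. Qed.

Lemma lcov_inst s q k : ideal_set (lcov q k) (lcov (inst s q) k).
Proof.
elim: q => [i X|p IHp q IHq|p IHp q IHq] /=.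
- have [ik|ik] := pselect (i = k); last by rewrite !recast_neq //; apply: ideal_bot.
  by subst k; rewrite !recast_id; exact: (proj2_sig s).
- by exists (lcov (inst s p) k), (lcov (inst s q) k).
- by split; [apply: ideal_low IHp; exact: leIl | apply: ideal_low IHq; exact: leIr].
Qed.

Lemma eps_teval p : eps (teval c p) = teval (fun i (X : Id (L i)) => eps (c X)) p.
Proof.
have [_ eI eU] := eps_0hom.
by elim: p => [i X|p IHp q IHq|p IHp q IHq] //=; rewrite ?eI ?eU IHp IHq.
Qed.

Lemma inst_in_eps s p : ideal_set (eps (teval c p)) (teval e (inst s p)).
Proof.
rewrite eps_teval; elim: p => [i X|p IHp q IHq|p IHp q IHq] /=.
- by rewrite epsE; exists (sval s i X); split; [exact: (proj2_sig s) | exact: lexx].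
- by exists (teval e (inst s p)), (teval e (inst s q)).
- by split; [apply: ideal_low IHp; exact: leIl | apply: ideal_low IHq; exact: leIr].
Qed.

Definition pick_point i (x : L i) : forall j, Id (L j) -> L j :=
  fun j Y => match recast x j with
             | Some x' => if pselect (ideal_set Y x') then x' else \bot
             | None => \bot
             end.

Lemma pick_point_in i (x : L i) j (Y : Id (L j)) : ideal_set Y (pick_point x Y).
Proof.
rewrite /pick_point; case: (recast x j) => [x'|]; last exact: ideal_bot.
by case: pselect => // ?; exact: ideal_bot.
Qed.

Definition point_sel i (x : L i) : selector :=
  exist is_selector (pick_point x) (pick_point_in x).

Lemma pick_pointE i (x : L i) (X : Id (L i)) : ideal_set X x -> pick_point x X = x.
Proof. by move=> hx; rewrite /= /pick_point recast_id; case: pselect. Qed.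

Lemma in_eps_le_inst q y :
  ideal_set (eps (teval c q)) y -> exists t, y <= teval e (inst t q).
Proof.
rewrite eps_teval; elim: q y => [i X|p IHp q IHq|p IHp q IHq] y /=.
- by rewrite epsE => -[x [hx hy]]; exists (point_sel x); rewrite /= pick_pointE.
- move=> [a [b [/IHp [t1 h1] /IHq [t2 h2] hy]]]; exists (sel_join t1 t2).
  apply: le_trans hy (leU2 _ _).
    exact: le_trans h1 (teval_inst_mono _ (sel_le_joinl _ _)).
  exact: le_trans h2 (teval_inst_mono _ (sel_le_joinr _ _)).
- move=> [/IHp [t1 h1] /IHq [t2 h2]]; exists (sel_join t1 t2); rewrite lexI.
  apply/andP; split.
    exact: le_trans h1 (teval_inst_mono _ (sel_le_joinl _ _)).
  exact: le_trans h2 (teval_inst_mono _ (sel_le_joinr _ _)).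
Qed.

Lemma c_le k (X Y : Id (L k)) :
  (forall z, ideal_set X z -> ideal_set Y z) -> c X <= c Y.
Proof. by move=> XY; apply: (is_0hom_mono (Cc.1 k)); apply/asboolP. Qed.

Lemma c_zero k (X : Id (L k)) : (forall z, ideal_set X z -> z = \bot) -> c X = \bot.
Proof.
move=> X0; apply/eqP; rewrite -lex0; have [<- _ _] := Cc.1 k.
by apply: c_le => z /X0 ->; exact: ideal_bot.
Qed.

Definition ucov_in p k (Y : Id (L k)) :=
  forall s, exists2 u, ucov (inst s p) k = Some u & ideal_set Y u.
Arguments ucov_in : clear implicits.

Definition ucov_defined p k := forall s, ucov (inst s p) k <> None.

Lemma ucov_definedP p k s : ucov_defined p k -> exists u, ucov (inst s p) k = Some u.
Proof. by case E: (ucov (inst s p) k) => [u|] H; [exists u | case: (H s)]. Qed.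

Definition cover_set p k : L k -> Prop :=
  fun y => exists s u, ucov (inst s p) k = Some u /\ y <= u.
Arguments cover_set : clear implicits.

Lemma cover_set_ideal p k : ucov_defined p k -> is_ideal (cover_set p k).
Proof.
move=> H; split.
- by have [u hu] := ucov_definedP sel0 H; exists \bot, sel0, u; rewrite le0x.
- by move=> x y xy [s [u [hu yu]]]; exists s, u; split => //; apply: le_trans xy yu.
- move=> x y [s1 [u1 [h1 x1]]] [s2 [u2 [h2 y2]]].
  have [u hu] := ucov_definedP (sel_join s1 s2) H; exists (sel_join s1 s2), u.
  split=> //; rewrite leUx (le_trans x1) ?(le_trans y2) //.
  + exact: ucov_inst_le (sel_le_joinr _ _) h2 hu.
  + exact: ucov_inst_le (sel_le_joinl _ _) h1 hu.
Qed.

Definition cover_ideal p k (H : ucov_defined p k) : Id (L k) :=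
  exist _ (cover_set p k) (cover_set_ideal H).

Lemma ucov_in_cover_ideal p k (H : ucov_defined p k) : ucov_in p k (cover_ideal H).
Proof.
by move=> s; have [u hu] := ucov_definedP s H; exists u => //; exists s, u.
Qed.

Definition eventually (P : selector -> Prop) := exists N, forall s, sel_le N s -> P s.

Definition omeet_in p q k (Y : Id (L k)) s :=
  exists2 u, omeet (ucov (inst s p) k) (ucov (inst s q) k) = Some u & ideal_set Y u.

Lemma ucov_in_of_omeet_None p q k Y :
  (exists s, ucov (inst s p) k = None) -> ucov_defined q k ->
  eventually (omeet_in p q Y) -> ucov_in q k Y.
Proof.
move=> [s1 h1] Hq [N HN] s; set t := sel_join (sel_join s s1) N.
have st : sel_le s t by apply: sel_le_trans (sel_le_joinl _ _) (sel_le_joinl _ _).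
have s1t : sel_le s1 t by apply: sel_le_trans (sel_le_joinr _ _) (sel_le_joinl _ _).
have [u hu Yu] := HN t (sel_le_joinr _ _).
rewrite (ucov_inst_None s1t h1) omeetNo in hu.
have [u' hu'] := ucov_definedP s Hq; exists u' => //.
exact: ideal_low (ucov_inst_le st hu' hu) Yu.
Qed.

(* Either an instance of [p] has no upper cover at [k], and eventually the
   meet of upper covers is that of [q]; or both terms have upper covers at [k]
   throughout, and the ideals they generate meet inside [Y]. *)
Lemma meet_le_c p q k (Y : Id (L k)) :
  (forall Y, ucov_in p k Y -> teval c p <= c Y) ->
  (forall Y, ucov_in q k Y -> teval c q <= c Y) ->
  eventually (omeet_in p q Y) -> teval c p `&` teval c q <= c Y.
Proof.
move=> lep leq ev.
have evC : eventually (omeet_in q p Y).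
  by case: ev => N HN; exists N => s /HN [u]; rewrite omeetC; exists u.
have [Np|Hp] := pselect (exists s, ucov (inst s p) k = None);
have [Nq|Hq] := pselect (exists s, ucov (inst s q) k = None).
- case: Np Nq ev => [s1 h1] [s2 h2] [N HN].
  have [u] := HN (sel_join (sel_join s1 s2) N) (sel_le_joinr _ _).
  rewrite (ucov_inst_None _ h1) ?(ucov_inst_None _ h2) //.
    exact: sel_le_trans (sel_le_joinr _ _) (sel_le_joinl _ _).
  exact: sel_le_trans (sel_le_joinl _ _) (sel_le_joinl _ _).
- apply: le_trans (leIr _ _) (leq _ (ucov_in_of_omeet_None Np _ ev)).
  by move=> s hs; apply: Hq; exists s.
- apply: le_trans (leIl _ _) (lep _ (ucov_in_of_omeet_None Nq _ evC)).
  by move=> s hs; apply: Hp; exists s.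
have {}Hp : ucov_defined p k by move=> s hs; apply: Hp; exists s.
have {}Hq : ucov_defined q k by move=> s hs; apply: Hq; exists s.
have := leI2 (lep _ (ucov_in_cover_ideal Hp)) (leq _ (ucov_in_cover_ideal Hq)).
move/le_trans; apply.
have [_ cI _] := Cc.1 k; rewrite -cI; apply: c_le.
move=> z [[s1 [u0 [e0 z0]]] [s2 [u1 [e1 z1]]]].
case: ev => N HN; set t := sel_join (sel_join s1 s2) N.
have s1t : sel_le s1 t by apply: sel_le_trans (sel_le_joinl _ _) (sel_le_joinl _ _).
have s2t : sel_le s2 t by apply: sel_le_trans (sel_le_joinr _ _) (sel_le_joinl _ _).
have [u0' e0'] := ucov_definedP t Hp; have [u1' e1'] := ucov_definedP t Hq.
have [u] := HN t (sel_le_joinr _ _); rewrite e0' e1' => -[<-]; apply: ideal_low.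
rewrite lexI (le_trans z0 (ucov_inst_le s1t e0 e0')).
exact: le_trans z1 (ucov_inst_le s2t e1 e1').
Qed.

Section MeetCase.
Variables p q : term IdL.
Hypothesis lep : forall k Y, ucov_in p k Y -> teval c p <= c Y.
Hypothesis leq : forall k Y, ucov_in q k Y -> teval c q <= c Y.

(* Each zero instance is zero at one of the finitely many indices of the
   term, so by directedness a single index works for all instances. *)
Lemma zero_meet_teval :
  (forall s, zero_term (inst s (Meet p q))) -> teval c (Meet p q) = \bot.
Proof.
move=> Z.
have Hk s : exists2 k, List.In k (tidx (Meet p q)) &
    omeet (ucov (inst s p) k) (ucov (inst s q) k) = Some \bot.
  have [k' hk'] :
      exists k', omeet (ucov (inst s p) k') (ucov (inst s q) k') = Some \bot.
    exact: ucov_meet_zeroP (Z s i0).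
  have [k hk hk0] := zero_meet_tidx hk'.
  by exists k; rewrite // -(tidx_tsubst (sval s) (Meet p q)).
have down k : down_closed sel_le
    (fun s => omeet (ucov (inst s p) k) (ucov (inst s q) k) = Some \bot).
  by move=> s t st h; apply: olex0; rewrite -h; apply: oleI2; apply: ucov_inst_mono.
have [k _ Hall] := directed_exists_in sel_le_joinl sel_le_joinr sel0 down Hk.
have ev : eventually (omeet_in p q (\bot : Id (L k))).
  by exists sel0 => s _; exists \bot; [exact: Hall | exact: ideal_bot].
have [c0 _ _] := Cc.1 k.
by apply/eqP; rewrite -lex0 -c0; exact: meet_le_c (@lep k) (@leq k) ev.
Qed.

Lemma meet_le_c_of_ucov_in k Y : ucov_in (Meet p q) k Y -> teval c (Meet p q) <= c Y.
Proof.
move=> H.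
have [Z|/existsNP [N nz]] := pselect (forall s, zero_term (inst s (Meet p q))).
  by rewrite zero_meet_teval // le0x.
apply: meet_le_c (@lep k) (@leq k) _; exists N => s Ns.
have [u hu Yu] := H s; exists u => //; rewrite -hu /=; apply/esym/ucov_meet_nonzero.
move=> [k' hk']; apply: nz; apply: zero_term_inst Ns _.
exact: ucov_zero_term (ucov_meet_zero k' (ex_intro _ k' hk')).
Qed.

End MeetCase.

Lemma ucov_in_joinl p q k Y : ucov_in (Join p q) k Y -> ucov_in p k Y.
Proof.
move=> H s; have [u /= hu Yu] := H s; move: hu.
case: (ucov (inst s p) k) => [a|] //; case: (ucov (inst s q) k) => [b|] //= [eu].
by exists a => //; apply: ideal_low Yu; rewrite -eu leUl.
Qed.

Lemma ucov_in_joinr p q k Y : ucov_in (Join p q) k Y -> ucov_in q k Y.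
Proof.
move=> H s; have [u /= hu Yu] := H s; move: hu.
case: (ucov (inst s p) k) => [a|] //; case: (ucov (inst s q) k) => [b|] //= [eu].
by exists b => //; apply: ideal_low Yu; rewrite -eu leUr.
Qed.

Lemma teval_le_c p :
  (forall k Y, ucov_in p k Y -> teval c p <= c Y) /\
  ((forall s, zero_term (inst s p)) -> teval c p = \bot).
Proof.
elim: p => [i X|p [lep zp] q [leq zq]|p [lep _] q [leq _]].
- split=> [k Y H|H] /=; last first.
    apply: c_zero => x hx; have := H (point_sel x) i.
    by rewrite /= pick_pointE // recast_id; case: eqP => // _ [].
  have [ik|ik] := pselect (i = k); last first.
    rewrite c_zero ?le0x // => x hx; have [u] := H (point_sel x).
    by rewrite /= pick_pointE // recast_neq //; case: eqP.
  subst k; apply: c_le => x hx; have [u] := H (point_sel x).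
  by rewrite /= pick_pointE // recast_id; case: eqP => [->|_] [<-] //; apply: ideal_bot.
- split=> [k Y H|H] /=.
    by rewrite leUx lep ?leq //; [apply: ucov_in_joinr H | apply: ucov_in_joinl H].
  rewrite zp ?zq ?joinx0 // => s k; by have /ojoin_eq0 [] := H s k.
- by split=> [k Y|]; [apply: meet_le_c_of_ucov_in | apply: zero_meet_teval].
Qed.

Lemma cover_teval_le p q k :
  (forall s, exists t, ole (ucov (inst s p) k) (Some (lcov (inst t q) k))) ->
  teval c p <= teval c q.
Proof.
move=> H; apply: le_trans (lcov_le_teval Cc.1 q k); apply: (teval_le_c p).1 => s.
have [t] := H s; case: (ucov (inst s p) k) => [u|] //= hu.
by exists u => //; apply: ideal_low hu (lcov_inst t q k).
Qed.

Definition inst_below p q := forall s, exists t, tle (inst s p) (inst t q).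

Lemma inst_below_down p q :
  down_closed sel_le (fun s => exists t, tle (inst s p) (inst t q)).
Proof.
by move=> s s' ss' [t ht]; exists t; apply: tle_trans (tle_inst_mono _ ss') ht.
Qed.

Lemma inst_below_trans p q r :
  inst_below p q -> (forall t, tle (inst t q) (inst t r)) -> inst_below p r.
Proof. by move=> H qr s; have [t ht] := H s; exists t; apply: tle_trans ht (qr t). Qed.

Lemma gen_teval_le i (X : Id (L i)) q : inst_below (Gen X) q -> c X <= teval c q.
Proof.
move=> H; apply: le_trans (lcov_le_teval Cc.1 q i); apply: c_le => x hx.
have [t /tle_covers /(_ i) [_]] := H (point_sel x).
rewrite /= pick_pointE // recast_id /= => hle.
exact: ideal_low hle (lcov_inst t q i).
Qed.

Lemma ucov_in_below_gen p j (Y : Id (L j)) : inst_below p (Gen Y) -> ucov_in p j Y.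
Proof.
move=> H s; have [t /tle_covers /(_ j) [+ _]] := H s.
move/ole_trans/(_ (ucov_gen_le _)); case: (ucov (inst s p) j) => [u|] //= hu.
by exists u => //; apply: ideal_low hu (proj2_sig t j Y).
Qed.

(* Every instance satisfies one of the five alternatives of
   [tle_meet_join_inv]; by directedness one of them holds for all instances. *)
Lemma meet_join_teval_le p0 p1 q0 q1 (P := Meet p0 p1) (Q := Join q0 q1) :
  (inst_below p0 Q -> teval c p0 <= teval c Q) ->
  (inst_below p1 Q -> teval c p1 <= teval c Q) ->
  (inst_below P q0 -> teval c P <= teval c q0) ->
  (inst_below P q1 -> teval c P <= teval c q1) ->
  inst_below P Q -> teval c P <= teval c Q.
Proof.
move=> le0 le1 le2 le3 H.
pose cover s := exists2 k, List.In k (tidx P) &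
  exists t, ole (ucov (inst s P) k) (Some (lcov (inst t Q) k)).
have dcover : down_closed sel_le cover.
  move=> s s' ss' [k hk [t ht]]; exists k => //; exists t.
  exact: ole_trans (ucov_inst_mono _ _ ss') ht.
have alt s : (exists t, tle (inst s p0) (inst t Q)) \/
    (exists t, tle (inst s p1) (inst t Q)) \/ (exists t, tle (inst s P) (inst t q0)) \/
    (exists t, tle (inst s P) (inst t q1)) \/ cover s.
  have [t /tle_meet_join_inv] := H s; rewrite -/(tsubst _ P) (tidx_tsubst _ P).
  case=> [h|[h|[h|[h|[k hk h]]]]]; do ?[by left; exists t | right].
  by exists k => //; exists t.
have dir := directed_or sel_le_joinl sel_le_joinr.
have dP p q := @inst_below_down p q.
have [h|{}alt] := dir _ _ (dP _ _)
  (down_closed_or (dP _ _)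
    (down_closed_or (dP _ _) (down_closed_or (dP _ _) dcover))) alt.
  by apply: le_trans (leIl _ _) (le0 h).
have [h|{}alt] := dir _ _ (dP _ _)
  (down_closed_or (dP _ _) (down_closed_or (dP _ _) dcover)) alt.
  by apply: le_trans (leIr _ _) (le1 h).
have [h|{}alt] := dir _ _ (dP _ _) (down_closed_or (dP _ _) dcover) alt.
  by apply: le_trans (le2 h) (leUl _ _).
have [h|h] := dir _ _ (dP _ _) dcover alt.
  by apply: le_trans (le3 h) (leUr _ _).
have down k : down_closed sel_le
    (fun s => exists t, ole (ucov (inst s P) k) (Some (lcov (inst t Q) k))).
  move=> s s' ss' [t ht]; exists t; exact: ole_trans (ucov_inst_mono _ _ ss') ht.
have [k _] := directed_exists_in sel_le_joinl sel_le_joinr sel0 down h.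
exact: cover_teval_le.
Qed.

Lemma inst_below_teval_le p q : inst_below p q -> teval c p <= teval c q.
Proof.
elim: p q => [i X|p0 IH0 p1 IH1|p0 IH0 p1 IH1] q H.
- exact: gen_teval_le.
- rewrite /= leUx IH0 ?IH1 //.
    by move=> s; have [t /tle_join_inv []] := H s; exists t.
  by move=> s; have [t /tle_join_inv []] := H s; exists t.
elim: q H => [j Y|q0 IHq0 q1 IHq1|q0 IHq0 q1 IHq1] H.
- exact/(teval_le_c _).1/ucov_in_below_gen.
- exact: meet_join_teval_le (IH0 _) (IH1 _) IHq0 IHq1 H.
- rewrite [teval c (Meet q0 q1)]/= lexI IHq0 ?IHq1 //; apply: inst_below_trans H _ => t.
    exact: tle_meetl1 (tle_refl _).
  exact: tle_meetl0 (tle_refl _).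
Qed.

Lemma teval_le_of_eps_le p q :
  eps (teval c p) <= eps (teval c q) -> teval c p <= teval c q.
Proof.
move=> /asboolP le_pq; apply: inst_below_teval_le => s.
have /le_pq /in_eps_le_inst [t ht] := inst_in_eps s p.
by exists t; apply: (coproduct_tle Ce i0).
Qed.

End Embedding.

Theorem theorem5p2 (I : Type) (d : I -> Order.disp_t)
    (L : forall i, bLatticeType (d i))
    (dL : Order.disp_t) (Lc : bLatticeType dL) (e : forall i, L i -> Lc)
    (He : @is_coproduct0 I d L dL Lc e)
    (dC : Order.disp_t) (C : bLatticeType dC) (c : forall i, Id (L i) -> C)
    (Hc : @is_coproduct0 I (fun _ => ideal_display)
            (fun i => (Id (L i) : bLatticeType ideal_display)) dC C c)
    (eps : C -> Id Lc)
    (Heps0 : is_0hom eps)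
    (Heps : forall i (X : Id (L i)), ideal_set (eps (c i X)) = eps_set (e i) X) :
  injective eps.
Proof.
have [[i0 _]|noI] := pselect (exists i : I, True); last first.
  by move=> a b _; apply: (coproduct0_empty Hc) => i; apply: noI; exists i.
move=> a b ab.
have [p ep] := coproduct_generated Hc i0 a; have [q eq] := coproduct_generated Hc i0 b.
subst a b.
have le_eps := teval_le_of_eps_le He Hc Heps0 Heps i0.
by apply/le_anti; rewrite !le_eps // ab.
Qed.
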